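(* Let $k\ge 5$ and $k<n\le k+2$. Then there is no antipodal $k$-splitting of $Q_2^n$.
   Context: $Q_2^n=\{0,1\}^n$. For $0\le m\le n$, an $m$-face of $Q_2^n$ is given by a tuple $a=(a_1,\dots,a_n)\in\{0,1,*\}^n$ with exactly $m$ entries equal to $*$; it denotes the set $\{x\in Q_2^n : x_i=a_i \text{ whenever } a_i\in\{0,1\}\}$. The direction of a face is the set of positions of its asterisks; two faces are parallel if they have the same direction, and two parallel faces $a,b$ are antipodal if $b_i=1-a_i$ at every non-asterisk position $i$. An antipodal $k$-splitting of $Q_2^n$ is a collection of exactly $2^k$ $(n-k)$-faces whose union is $Q_2^n$ and which contains no pair of parallel non-antipodal faces. *)

From mathcomp Require Import all_boot.
Set Implicit Arguments. Unset Strict Implicit. Unset Printing Implicit Defensive.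

Definition vertex (n : nat) := {ffun 'I_n -> bool}.
(* A face of Q_2^n: None encodes the asterisk '*', Some b a fixed coordinate b. *)
Definition face (n : nat) := {ffun 'I_n -> option bool}.

Definition direction n (a : face n) : {set 'I_n} := [set i | a i == None].

Definition is_mface n (m : nat) (a : face n) : bool := #|direction a| == m.

Definition in_face n (x : vertex n) (a : face n) : bool :=
  [forall i, if a i is Some b then x i == b else true].

Definition parallel n (a b : face n) : bool := direction a == direction b.

Definition antipodal n (a b : face n) : bool :=
  parallel a b &&
  [forall i, if a i is Some c then b i == Some (~~ c) else true].

Definition antipodal_splitting n (k : nat) (F : {set face n}) : Prop :=
  [/\ #|F| = 2 ^ k,
      (forall a, a \in F -> is_mface (n - k) a),
      (forall x : vertex n, exists2 a, a \in F & in_face x a) &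
      (forall a b, a \in F -> b \in F -> a != b -> parallel a b -> antipodal a b)].

From mathcomp Require Import all_boot all_algebra zify.
Set Implicit Arguments. Unset Strict Implicit. Unset Printing Implicit Defensive.
Import GRing.Theory Num.Theory.

(* The 2^k faces, each with n - k asterisks, cover the cube and their volumes add up to 2^n,
   so they tile it; two faces with the same direction are antipodal, so every direction carries
   at most two faces and 2^k <= 2 C(n, n - k). This fails for n = k + 1, and for n = k + 2
   unless k = 5.
   For k = 5, n = 7 use the characters chi_T(x) = (-1)^#{j in T | x_j = 1} of the cube. Summing
   chi_T over the tiling face by face, only faces whose direction avoids T contribute, and the
   total is 0. Taking T the complement of a used direction shows that this direction carries
   exactly two (antipodal) faces; taking T the complement of a 3-set U, of even size 4, where
   antipodal faces contribute equal signs, shows that U contains an even number of used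
   directions. So the used directions form a graph on 7 vertices in which every triangle has an
   even number of edges; such a graph lies in a cut, hence has at most 12 edges, whereas 32
   faces need at least 16 directions. *)

Lemma pos_sum_card_eq1 (I : finType) (f : I -> nat) :
  (forall i, 0 < f i) -> \sum_i f i = #|I| -> forall i, f i = 1.
Proof.
move=> f_gt0 sum_f i.
have /eqP : \sum_j (f j - 1) = 0.
  apply/eqP; rewrite -(eqn_add2r #|I|) add0n -{2}sum_f -sum1_card -big_split /=.
  by apply/eqP/eq_bigr => j _; rewrite subnK.
rewrite sum_nat_eq0 => /forallP/(_ i)/implyP/(_ isT)/eqP.
by have := f_gt0 i; lia.
Qed.

Lemma even_card_sum_pm2 (I : finType) (D : {set I}) (s : I -> int) :
  (forall i, i \in D -> s i = 2%R \/ s i = (-2)%R) -> (\sum_(i in D) s i)%R = 0%R ->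
  ~~ odd #|D|.
Proof.
move=> pm2; pose P := [set i | s i == 2%R].
rewrite (big_setID P) /= (eq_bigr (fun=> 2%R)); last by move=> i; rewrite !inE => /andP[_ /eqP].
rewrite [X in (_ + X)%R](eq_bigr (fun=> (-2)%R)); last first.
  by move=> i; rewrite !inE => /andP[/negP sP /pm2[]] // E; rewrite E eqxx in sP.
rewrite !sumr_const -(cardsID P D).
by move: #|_| #|_| => a b; lia.
Qed.

Lemma double_succ_lt_pow2 k : 5 <= k -> 2 * k.+1 < 2 ^ k.
Proof.
elim: k => // k IH; rewrite ltnS leq_eqVlt => /orP[/eqP <- // | /IH].
by rewrite expnS; lia.
Qed.

Lemma mul_succ_lt_pow2 k : 6 <= k -> k.+2 * k.+1 < 2 ^ k.
Proof.
elim: k => // k IH; rewrite ltnS leq_eqVlt => /orP[/eqP <- // | lt5k].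
by have := IH lt5k; rewrite expnS; nia.
Qed.

Section Cube.
Variable n : nat.
Implicit Types (a b : face n) (x : vertex n) (T U d : {set 'I_n}) (F : {set face n}).

Lemma card_in_face a : #|[set x | in_face x a]| = 2 ^ #|direction a|.
Proof.
pose Fa i (y : bool) := if a i is Some b then y == b else true.
have -> : #|[set x | in_face x a]| = #|(family Fa : simpl_pred (vertex n))|.
  apply: eq_card => x; rewrite inE /in_face; apply/forallP/familyP => H i;
    by move: (H i); rewrite /Fa; case: (a i).
rewrite card_family foldrE big_image /= (bigID [in direction a]) /=.
rewrite (eq_bigr (fun=> 2)) => [|i]; last by rewrite /Fa inE => /eqP->; rewrite card_bool.
rewrite [X in _ * X]big1 => [|i]; last by rewrite /Fa inE; case: (a i) => // b _; exact: card1.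
by rewrite muln1 prod_nat_const.
Qed.

Lemma splitting_partition k F : (k <= n)%N -> antipodal_splitting k F ->
  forall x, #|[set a in F | in_face x a]| = 1%N.
Proof.
move=> le_kn [cardF dimF coverF _]; apply: pos_sum_card_eq1.
  by move=> x; have [a aF xa] := coverF x; apply/card_gt0P; exists a; rewrite inE aF.
have card_sum (A : pred (face n)) (P : pred (face n)) :
    #|[set a in A | P a]| = (\sum_(a in A) if P a then 1 else 0)%N.
  by rewrite -big_mkcondr -sum1_card; apply: eq_bigl => a; rewrite inE.
under eq_bigr => x _ do rewrite card_sum.
rewrite exchange_big /= card_ffun card_bool card_ord.
have -> : (2 ^ n = #|F| * 2 ^ (n - k))%N by rewrite cardF -expnD subnKC.
rewrite -sum1_card big_distrl /=; apply: eq_bigr => a aF; rewrite mul1n.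
rewrite -big_mkcond sum1dep_card -(eqP (dimF a aF)) -card_in_face.
by apply: eq_card => x; rewrite inE.
Qed.

Definition antipodal_family F :=
  forall a b, a \in F -> b \in F -> a != b -> parallel a b -> antipodal a b.

Definition antipode a : face n := [ffun i => if a i is Some c then Some (~~ c) else None].

Definition dir_class F d := [set a in F | direction a == d].

Lemma antipodal_eq_antipode a b : antipodal a b -> b = antipode a.
Proof.
case/andP => /eqP dir_ab /forallP ab; apply/ffunP => i; rewrite ffunE.
move: (ab i); case ai: (a i) => [c|]; first by move/eqP.
have : i \in direction b by rewrite -dir_ab inE ai.
by rewrite inE => /eqP.
Qed.

Lemma dir_class_sub_antipode F d a : antipodal_family F ->
  a \in dir_class F d -> dir_class F d \subset [set a; antipode a].
Proof.
move=> antiF; rewrite inE => /andP[aF /eqP da]; apply/subsetP => b.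
rewrite !inE => /andP[bF /eqP db]; have [// | ab] := eqVneq a b.
by rewrite (antipodal_eq_antipode (antiF a b aF bF ab _)) ?eqxx ?orbT // /parallel da db.
Qed.

Lemma card_dir_class_le2 F d : antipodal_family F -> (#|dir_class F d| <= 2)%N.
Proof.
move=> antiF; have [-> | [a ad]] := set_0Vmem (dir_class F d); first by rewrite cards0.
apply: leq_trans (subset_leq_card (dir_class_sub_antipode antiF ad)) _.
by rewrite cards2; case: (_ != _).
Qed.

Lemma card_le_directions F :
  antipodal_family F -> (#|F| <= 2 * #|[set direction a | a in F]|)%N.
Proof.
move=> antiF; rewrite -sum1_card (partition_big_imset (@direction n)) /= mulnC -sum_nat_const.
by apply: leq_sum => d _; rewrite sum1dep_card; apply: card_dir_class_le2.
Qed.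

Lemma splitting_card_bound k F : antipodal_splitting k F -> (2 ^ k <= 2 * 'C(n, n - k))%N.
Proof.
case=> cardF dimF _ antiF; rewrite -cardF -[n in 'C(n, _)]card_ord -card_draws.
apply: leq_trans (card_le_directions antiF) _; rewrite leq_mul2l; apply/orP; right.
by apply/subset_leq_card/subsetP => _ /imsetP[a aF ->]; rewrite inE; apply: dimF.
Qed.

Definition flip (i : 'I_n) x : vertex n := [ffun j => if j == i then ~~ x j else x j].

Lemma flipK i : involutive (flip i).
Proof. by move=> x; apply/ffunP => j; rewrite !ffunE; case: eqP => // _; rewrite negbK. Qed.

Local Open Scope ring_scope.

Definition chi T x : int := (-1) ^+ #|[set j in T | x j]|.

(* The common value of [chi T] on the vertices of [a] when [T] avoids the direction of [a]. *)
Definition chi_face T a : int := (-1) ^+ #|[set j in T | a j == Some true]|.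

Lemma chi_flip T i x : i \in T -> chi T (flip i x) = - chi T x.
Proof.
move=> iT; rewrite /chi (cardsD1 i [set j in T | flip i x j]) (cardsD1 i [set j in T | x j]).
have -> : [set j in T | flip i x j] :\ i = [set j in T | x j] :\ i.
  by apply/setP => j; rewrite !inE ffunE; case: eqP.
by rewrite !inE iT ffunE eqxx /=; case: (x i); rewrite /= !exprS ?mulNr ?opprK ?mul1r.
Qed.

Lemma sum_chi_flip_invariant T i (P : pred (vertex n)) :
  i \in T -> (forall x, P (flip i x) = P x) -> \sum_(x | P x) chi T x = 0.
Proof.
move=> iT Pflip; set S := \sum_(x | P x) chi T x.
suff : S = - S by lia.
rewrite {1}/S (reindex_inj (can_inj (flipK i))) -sumrN /=.
by apply: eq_big => x; [rewrite Pflip | rewrite chi_flip].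
Qed.

Lemma sum_chi_in_face T a :
  \sum_(x | in_face x a) chi T x =
  if [disjoint T & direction a] then (2 ^ #|direction a|)%:R * chi_face T a else 0.
Proof.
case: ifPn => [Ta | ]; last first.
  rewrite -setI_eq0 => /set0Pn[i]; rewrite !inE => /andP[iT /eqP ai].
  apply: (sum_chi_flip_invariant iT) => x.
  by apply: eq_forallb => j; rewrite ffunE; case: eqP => // ->; rewrite ai.
rewrite (eq_bigr (fun=> chi_face T a)) => [|x /forallP xa].
  rewrite sumr_const mulr_natl -card_in_face; congr (_ *+ _).
  by apply: eq_card => x; rewrite inE.
rewrite /chi /chi_face; congr (_ ^+ _); apply: eq_card => j; rewrite !inE.
case jT: (j \in T) => //=; move: (xa j); case aj: (a j) => [b|].
  by move/eqP->; case: b aj.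
by move: Ta; rewrite disjoints_subset => /subsetP/(_ j jT); rewrite !inE aj.
Qed.

(* [chi T] sums to 0 over the cube (flip a coordinate in [T]); sum it face by face instead. *)
Lemma sum_chi_face_tiling m F T :
  (forall x, #|[set a in F | in_face x a]| = 1%N) ->
  (forall a, a \in F -> #|direction a| = m) -> T != set0 ->
  \sum_(a in F | [disjoint T & direction a]) chi_face T a = 0.
Proof.
move=> tiling dimF /set0Pn[i iT].
have : \sum_x chi T x = 0 by apply: (sum_chi_flip_invariant (P := predT) iT).
have split_x x : chi T x = \sum_(a in F) (if in_face x a then chi T x else 0).
  rewrite -big_mkcondr /=.
  rewrite (eq_bigl [in [set a in F | in_face x a]]) ?sumr_const ?tiling // => a.
  by rewrite inE.
rewrite (eq_bigr _ (fun x _ => split_x x)) exchange_big /=.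
under eq_bigr => a aF do rewrite -big_mkcond /= sum_chi_in_face (dimF a aF).
rewrite -big_mkcondr /= -mulr_sumr => /eqP; rewrite mulf_eq0 pnatr_eq0 expn_eq0 /=.
by move/eqP.
Qed.

Lemma card_dir_class_splitting k F d : (0 < k <= n)%N -> antipodal_splitting k F ->
  d \in [set direction a | a in F] -> #|dir_class F d| = 2%N.
Proof.
move=> /andP[k_gt0 le_kn] splitF /imsetP[a0 a0F ->]; have [_ dimF _ antiF] := splitF.
have {}dimF a : a \in F -> #|direction a| = (n - k)%N by move/dimF/eqP.
have a0D : a0 \in dir_class F (direction a0) by rewrite inE a0F eqxx.
have coD_neq0 : ~: direction a0 != set0.
  by rewrite -card_gt0; have := cardsC (direction a0); rewrite card_ord dimF //; lia.
have := sum_chi_face_tiling (splitting_partition le_kn splitF) dimF coD_neq0.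
rewrite (eq_bigl [in dir_class F (direction a0)]) => [|a]; last first.
  rewrite inE; case aF: (a \in F) => //=.
  by rewrite disjoint_sym -subsets_disjoint eqEcard !dimF // leqnn andbT.
rewrite (big_setD1 a0) //= => sum0.
apply/eqP; rewrite eqn_leq card_dir_class_le2 //= (cardsD1 a0) a0D ltnS card_gt0.
apply: contraPneq sum0 => ->.
by rewrite big_set0 addr0 /chi_face -signr_odd; apply/eqP; rewrite signr_eq0.
Qed.

Lemma chi_face_antipode T a : [disjoint T & direction a] ->
  chi_face T a * chi_face T (antipode a) = (-1) ^+ #|T|.
Proof.
move=> Ta; rewrite /chi_face -exprD.
have -> : [set j in T | antipode a j == Some true] = T :\: [set j in T | a j == Some true].
  apply/setP => j; rewrite !inE ffunE; case jT: (j \in T) => //=.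
  case aj: (a j) => [[] | ] //.
  by move: Ta; rewrite disjoints_subset => /subsetP/(_ j jT); rewrite !inE aj.
by rewrite -(cardsID [set j in T | a j == Some true] T) setIdE setIA setIid.
Qed.

Lemma sum_dir_class_pm2 k F d T : (0 < k <= n)%N -> antipodal_splitting k F ->
  d \in [set direction a | a in F] -> [disjoint T & d] -> ~~ odd #|T| ->
  \sum_(a in dir_class F d) chi_face T a = 2 \/ \sum_(a in dir_class F d) chi_face T a = -2.
Proof.
move=> kn splitF dF Td evenT; have [_ _ _ antiF] := splitF.
have card2 := card_dir_class_splitting kn splitF dF.
have /card_gt0P[a aD] : (0 < #|dir_class F d|)%N by rewrite card2.
have classE : dir_class F d = [set a; antipode a].
  apply/eqP; rewrite eqEcard dir_class_sub_antipode //= card2 cards2.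
  by case: (_ != _).
have a_neq : a != antipode a by move: card2; rewrite classE cards2; case: (_ != _).
move: aD; rewrite inE => /andP[_ /eqP da].
have := chi_face_antipode (a := a) (T := T); rewrite da -signr_odd (negbTE evenT) => /(_ Td).
have chi_face_pm1 b : chi_face T b = 1 \/ chi_face T b = -1.
  by rewrite /chi_face -signr_odd; case: odd; [right | left].
rewrite classE big_setU1 ?big_set1 ?inE //=.
by case: (chi_face_pm1 a) => ->; case: (chi_face_pm1 (antipode a)) => ->; lia.
Qed.

Lemma even_directions_within k F U : (0 < k <= n)%N -> antipodal_splitting k F ->
  ~: U != set0 -> ~~ odd #|~: U| ->
  ~~ odd #|[set d in [set direction a | a in F] | d \subset U]|.
Proof.
move=> kn splitF coU_neq0 coU_even; have /andP[_ le_kn] := kn; have [_ dimF _ _] := splitF.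
have {}dimF a : a \in F -> #|direction a| = (n - k)%N by move/dimF/eqP.
have := sum_chi_face_tiling (splitting_partition le_kn splitF) dimF coU_neq0.
set D := [set d in _ | _].
rewrite (partition_big (@direction n) [in D]) => [|a /andP[aF]]; last first.
  by rewrite disjoint_sym -subsets_disjoint !inE => ->; rewrite imset_f.
rewrite (eq_bigr (fun d => \sum_(a in dir_class F d) chi_face (~: U) a)) => [sum0 | d]; last first.
  rewrite inE => /andP[_ dU]; apply: eq_bigl => a; rewrite inE.
  case: (a \in F) => //=; case: eqP => [-> | _]; rewrite ?andbF ?andbT //.
  by rewrite disjoint_sym -subsets_disjoint.
apply: even_card_sum_pm2 sum0 => d; rewrite inE => /andP[dF dU].
by apply: sum_dir_class_pm2 kn splitF dF _ _; rewrite // disjoint_sym -subsets_disjoint.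
Qed.

End Cube.

Section EvenTriangles.
Variables (T : finType) (E : {set {set T}}).
Hypothesis card_edge : forall d, d \in E -> #|d| = 2.

Lemma loop_notin_edges x : [set x; x] \notin E.
Proof. by apply/negP => /card_edge; rewrite setUid cards1. Qed.

Lemma card_edges_within_triple p q r : p != q -> p != r -> q != r ->
  #|[set d in E | d \subset [set p; q; r]]| =
    ([set p; q] \in E) + ([set p; r] \in E) + ([set q; r] \in E).
Proof.
move=> pq pr qr; set s := [:: [set p; q]; [set p; r]; [set q; r]].
have -> : [set d in E | d \subset [set p; q; r]] = [set d in s | d \in E].
  apply/setP => d; rewrite !inE [RHS]andbC; apply: andb_id2l.
  move/card_edge/eqP/cards2P => [u [v [uv ->]]]; apply/idP/idP.
    rewrite subUset !sub1set !inE -!orbA => /andP[uU vU].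
    move: uU vU uv.
    case/or3P => /eqP-> /or3P[] /eqP->; rewrite ?eqxx //=;
      by rewrite ?(setUC [set q]) ?(setUC [set r]) ?eqxx ?orbT.
  by case/or3P => /eqP->; apply/subsetP => x; rewrite !inE => /orP[] ->; rewrite ?orbT.
have uniq_s : uniq s.
  have neq_by x (A B : {set T}) : x \in A -> x \notin B -> A != B.
    by move=> xA; apply: contraNneq => <-.
  rewrite /= !inE !negb_or !andbT (neq_by q) ?(neq_by p) ?inE ?eqxx ?orbT //;
    by rewrite negb_or ?pq ?pr ?qr ?andbT // eq_sym.
have -> : #|[set d in s | d \in E]| = #|[seq d <- s | d \in E]|.
  by apply: eq_card => d; rewrite mem_filter inE andbC.
by rewrite (card_uniqP _) ?filter_uniq // size_filter /= addn0 addnA.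
Qed.

Hypothesis even_triangles :
  forall U : {set T}, #|U| = 3 -> ~~ odd #|[set d in E | d \subset U]|.

Lemma edge_triangle_parity p q r : p != q -> p != r -> q != r ->
  ([set p; q] \in E) (+) ([set p; r] \in E) = ([set q; r] \in E).
Proof.
move=> pq pr qr; have card3 : #|[set p; q; r]| = 3.
  by rewrite setUC cardsU1 cards2 pq !inE negb_or ![r == _]eq_sym pr qr.
move: (even_triangles card3); rewrite card_edges_within_triple // !oddD !oddb.
by rewrite negb_add => /eqP.
Qed.

Lemma card_even_triangle_graph : 4 * #|E| <= #|T| ^ 2.
Proof.
have [-> | [d0 /card_edge/eqP/cards2P [x0 _]]] := set_0Vmem E; first by rewrite cards0.
(* Triangles through [x0] force every edge across the cut between its neighbours and the rest. *)
pose A := [set v | [set x0; v] \in E].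
have E_cut : E \subset [set [set uv.1; uv.2] | uv in setX A (~: A)].
  apply/subsetP => d dE; have /eqP/cards2P [u [v [uv duv]]] := card_edge dE.
  suff: (u \in A) = (v \notin A).
    case uA: (u \in A) => /esym; [move=> vA | move/negbFE=> vA]; apply/imsetP.
      by exists (u, v); rewrite // in_setX in_setC uA vA.
    by exists (v, u); rewrite ?in_setX ?in_setC ?uA ?vA //= setUC.
  rewrite !inE; case: (eqVneq u x0) duv => [-> | u0] duv.
    by rewrite -duv dE (negPf (loop_notin_edges x0)).
  case: (eqVneq v x0) duv => [-> | v0] duv.
    by rewrite (setUC [set x0] [set u]) -duv dE (negPf (loop_notin_edges x0)).
  have := edge_triangle_parity (p := x0) (q := u) (r := v).
  rewrite -duv dE !(eq_sym x0) u0 v0 uv => /(_ isT isT isT).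
  by case: ([set x0; u] \in E); case: ([set x0; v] \in E).
rewrite -(cardsC A); apply: leq_trans (nat_AGM2 _ _); rewrite leq_mul2l -cardsX.
exact: leq_trans (subset_leq_card E_cut) (leq_imset_card _ _).
Qed.

End EvenTriangles.

Lemma no_antipodal_5_splitting_Q7 (F : {set face 7}) : ~ antipodal_splitting 5 F.
Proof.
move=> splitF; have [cardF dimF _ antiF] := splitF.
have card_edge d : d \in [set direction a | a in F] -> #|d| = 2.
  by case/imsetP => a aF ->; apply/eqP/dimF.
have even_triangles (U : {set 'I_7}) :
    #|U| = 3 -> ~~ odd #|[set d in [set direction a | a in F] | d \subset U]|.
  move=> cardU; have cardCU : #|~: U| = 4 by have := cardsC U; rewrite card_ord cardU; lia.
  by apply: (even_directions_within (k := 5)); rewrite // -?card_gt0 cardCU.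
have := card_even_triangle_graph card_edge even_triangles.
have := card_le_directions antiF; rewrite cardF card_ord.
by move: #|_| => e; lia.
Qed.

Theorem proposition17 (k n : nat) :
  5 <= k -> k < n -> n <= k + 2 ->
  ~ (exists F : {set face n}, antipodal_splitting k F).
Proof.
move=> k_ge5 lt_kn le_nk [F splitF]; have := splitting_card_bound splitF.
have [n_eq | n_neq] := eqVneq n k.+1.
  by subst n; rewrite subSnn bin1; have := double_succ_lt_pow2 k_ge5; lia.
have n_eq : n = k.+2 by lia.
subst n; have -> : k.+2 - k = 2 by lia.
have [k_eq | k_neq] := eqVneq k 5; first by subst k; case: (no_antipodal_5_splitting_Q7 splitF).
have := mul_bin_diag k.+2 1; rewrite bin1 => <-.
by have := @mul_succ_lt_pow2 k; lia.
Qed.
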